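(* Let $X$ be an infinite set and let $w_1, w_2, \ldots \in \{a,b\}^+$ be such that no non-empty proper prefix of any $w_n$ is a suffix of any $w_m$ ($m,n\in\mathbb{N}$), and $w_n$ is not a subword of $w_m$ whenever $m \neq n$. Then $(w_1, w_2, \ldots)$ is a universal sequence for $X^X$.
   Context: $\{a,b\}^+$ is the free semigroup of non-empty words over $\{a,b\}$. $X^X$ is the full transformation monoid of all functions $X\to X$ under composition. A sequence $w_1, w_2, \ldots \in \{a,b\}^+$ is universal for a semigroup $T$ if for every sequence $f_1, f_2, \ldots \in T$ there is a semigroup homomorphism $\Phi: \{a,b\}^+ \to T$ with $(w_n)\Phi = f_n$ for all $n$. *)

From mathcomp Require Import all_boot.
Set Implicit Arguments. Unset Strict Implicit. Unset Printing Implicit Defensive.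

(* Words over {a,b}: a = false, b = true.  {a,b}^+ = non-empty words. *)
Definition word := seq bool.

(* Full transformation monoid X^X acting on the RIGHT, as in the paper:
   the product f g means "first f, then g", i.e. x (f g) = (x f) g. *)
Definition tmul (X : Type) (f g : X -> X) : X -> X := fun x => g (f x).

(* A semigroup homomorphism Phi : {a,b}^+ -> X^X, represented as a function
   on words which is multiplicative on non-empty words. *)
Definition is_sg_hom (X : Type) (Phi : word -> (X -> X)) : Prop :=
  forall u v : word, u != [::] -> v != [::] ->
    Phi (u ++ v) = tmul (Phi u) (Phi v).

Definition universal_for_transf (X : Type) (w : nat -> word) : Prop :=
  forall f : nat -> (X -> X),
    exists Phi : word -> (X -> X), is_sg_hom Phi /\ forall n, Phi (w n) = f n.

Definition subword (u v : word) : bool := infix u v.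

Definition infinite_type (X : Type) : Prop :=
  exists g : nat -> X, injective g.

From mathcomp Require Import all_boot zify.
From mathcomp Require Import boolp classical_sets.
Set Implicit Arguments. Unset Strict Implicit. Unset Printing Implicit Defensive.

(* Being infinite, X is in bijection with K * {a,b}^* for some K: take a
   maximal family of injective word-indexed sequences with disjoint ranges;
   only finitely many points escape it, and they are absorbed into one of the
   sequences.  A point (k, v) carries a pending word v.  Reading a letter
   appends it to v, and once v = v' w_m the map f_m is applied to (k, v').
   The hypotheses on the w_n ensure that while w_m is read from (k, v) the
   pending word never ends with a code word before w_m is complete, so w_m
   acts on every point as f_m. *)

Lemma eq_cat_suffix (T : eqType) (a b c d : seq T) :
  a ++ b = c ++ d -> size b <= size d -> suffix b d.
Proof.
move=> Eab le_bd; have := suffix_suffix a b.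
rewrite Eab !suffixE size_cat drop_cat.
have -> : (size c + size d - size b < size c) = false by lia.
by have -> : size c + size d - size b - size c = size d - size b by lia.
Qed.

Lemma eq_cat_prefix (T : eqType) (a b c : seq T) : a ++ c = b ++ c -> a = b.
Proof.
move=> Eac; have size_ab : size a = size b.
  by have := congr1 size Eac; rewrite !size_cat; lia.
by move: (eqxx (a ++ c)); rewrite {2}Eac eqseq_cat // => /andP[/eqP].
Qed.

Section Code.
Variable w : nat -> word.
Hypothesis w_neq0 : forall n, w n != [::].
Hypothesis prefix_not_suffix : forall n m (p : word), p != [::] ->
  size p < size (w n) -> prefix p (w n) -> ~~ suffix p (w m).
Hypothesis not_infix : forall n m, m <> n -> ~~ subword (w n) (w m).

Lemma infix_code_eq m m' : infix (w m') (w m) -> m' = m.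
Proof. by move=> inf; apply: contrapT => /nesym/not_infix; rewrite /subword inf. Qed.

Lemma cat_code_take_eq m m' (v v' : word) j : 0 < j <= size (w m) ->
  v' ++ w m' = v ++ take j (w m) -> [/\ m' = m, j = size (w m) & v' = v].
Proof.
move=> /andP[j_gt0 j_le] Evv'.
have size_take : size (take j (w m)) = j by rewrite size_takel.
have pre : prefix (take j (w m)) (w m) by rewrite prefixE size_take.
case: (leqP (size (w m')) j) => [le_m'j | lt_jm'].
  have suf : suffix (w m') (take j (w m)) by apply: (eq_cat_suffix Evv'); rewrite size_take.
  have Em' : m' = m by apply/infix_code_eq/(suffix_infix_trans suf)/prefixW.
  subst m'; have Ej : j = size (w m) by lia.
  by split=> //; move: Evv'; rewrite Ej take_size => /eq_cat_prefix.
have suf : suffix (take j (w m)) (w m').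
  by apply: (eq_cat_suffix (esym Evv')); rewrite size_take ltnW.
case: (ltnP j (size (w m))) => [lt_jm | ge_jm].
  have ne0 : take j (w m) != [::] by rewrite -size_eq0 size_take -lt0n.
  by move: (@prefix_not_suffix m m' _ ne0); rewrite size_take suf => /(_ lt_jm pre).
have Ej : j = size (w m) by lia.
move: suf; rewrite Ej take_size => /suffixW /infix_code_eq Em.
by move: lt_jm'; rewrite -Em -Ej ltnn.
Qed.

Section Automaton.
Variables (X K : Type) (enc : K * word -> X) (dec : X -> K * word).
Hypotheses (encK : cancel enc dec) (decK : cancel dec enc).
Variable f : nat -> X -> X.

Definition read (c : bool) (x : X) : X :=
  let: (k, v) := dec x in
  match pselect (exists mv : nat * word, rcons v c = mv.2 ++ w mv.1) with
  | left ex_mv => let: (m, v') := proj1_sig (cid ex_mv) in f m (enc (k, v'))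
  | right _ => enc (k, rcons v c)
  end.

Definition act (u : word) (x : X) : X := foldl (fun y c => read c y) x u.

Lemma act_hom : is_sg_hom act.
Proof. by move=> u v _ _; apply: funext => x; rewrite /act foldl_cat. Qed.

Lemma act_rcons u c x : act (rcons u c) x = read c (act u x).
Proof. by rewrite /act foldl_rcons. Qed.

Lemma act_take m k v i : i <= size (w m) ->
  act (take i (w m)) (enc (k, v)) =
  if i == size (w m) then f m (enc (k, v)) else enc (k, v ++ take i (w m)).
Proof.
elim: i => [|i IHi] lt_im.
  by rewrite take0 cats0 eq_sym size_eq0 (negbTE (w_neq0 m)).
rewrite (take_nth false lt_im) act_rcons IHi ?(ltnW lt_im) // (ltn_eqF lt_im).
rewrite /read encK rcons_cat -(take_nth false lt_im).
case: pselect => [ex_mv | no_mv].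
  case: cid => -[m' v'] /= /esym/cat_code_take_eq [|-> -> ->] //.
  by rewrite eqxx.
case: eqP => // Ei; case: no_mv; exists (m, v).
by rewrite /= Ei take_size.
Qed.

Lemma act_code m x : act (w m) x = f m x.
Proof.
rewrite -[x]decK; case: (dec x) => k v.
by have := act_take k v (leqnn (size (w m))); rewrite take_size eqxx.
Qed.

End Automaton.
End Code.

Section InjectiveOrFinite.
Variables (T : eqType) (P : T -> Prop).

Definition fresh (l : seq T) : option T :=
  match pselect (exists x, P x /\ x \notin l) with
  | left ex_x => Some (proj1_sig (cid ex_x))
  | right _ => None
  end.

Lemma freshP l :
  if fresh l is Some x then P x /\ x \notin l else forall x, P x -> x \in l.
Proof.
rewrite /fresh; case: pselect => [ex_x | no_x]; first by case: cid.
by move=> x Px; apply: contrapT => /negP xNl; apply: no_x; exists x.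
Qed.

Fixpoint greedy n : seq T :=
  if n is n'.+1 then
    if fresh (greedy n') is Some x then rcons (greedy n') x else greedy n'
  else [::].

Lemma greedy_uniq n : uniq (greedy n) /\ {in greedy n, forall x, P x}.
Proof.
elim: n => [//|n [uniq_n P_n] /=].
have := freshP (greedy n); case: fresh => [x [Px xNl] | _] //.
by rewrite rcons_uniq xNl uniq_n; split=> // y; rewrite mem_rcons inE => /predU1P[->|/P_n].
Qed.

Lemma greedy_subset m n : m <= n -> {subset greedy m <= greedy n}.
Proof.
elim: n => [|n IHn]; first by rewrite leqn0 => /eqP->.
rewrite leq_eqVlt => /predU1P[-> //|/IHn sub_mn x /sub_mn] /=.
by case: fresh => // y; rewrite mem_rcons inE => ->; rewrite orbT.
Qed.

Lemma injective_or_finite :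
  (exists h : nat -> T, injective h /\ forall n, P (h n)) \/
  exists s : seq T, uniq s /\ forall x, P x <-> x \in s.
Proof.
case: (pselect (exists n, fresh (greedy n) = None)) => [[n fresh_n] | all_fresh].
  right; exists (greedy n); have [uniq_n P_n] := greedy_uniq n.
  by split=> // x; split=> [|/P_n //]; have := freshP (greedy n); rewrite fresh_n => /[apply].
have fresh_some n : exists x, fresh (greedy n) = Some x.
  by case E: fresh => [x|]; [exists x | case: all_fresh; exists n].
have [x0 _] := fresh_some 0.
pose h n := odflt x0 (fresh (greedy n)).
have h_fresh n : [/\ P (h n), h n \notin greedy n & h n \in greedy n.+1].
  have := freshP (greedy n); rewrite /h /=; have [x ->] := fresh_some n.
  by move=> [Px xN]; split=> //; rewrite mem_rcons mem_head.
left; exists h; split=> [i j Eij | n]; last by case: (h_fresh n).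
have sep a b : a < b -> h a != h b.
  have [_ hbN _] := h_fresh b; have [_ _ haS] := h_fresh a.
  by move=> lt_ab; apply: contraNneq hbN => <-; exact: greedy_subset lt_ab _ haS.
by case: (ltngtP i j) => // /sep; rewrite Eij eqxx.
Qed.

End InjectiveOrFinite.

Lemma all_negb_nseq (u : word) : all negb u -> u = nseq (size u) false.
Proof. by elim: u => [//|[] u IHu] //= /IHu <-. Qed.

Section Absorb.
Variables (T : eqType) (s0 : word -> T) (s : seq T).
Hypotheses (s0_inj : injective s0) (uniq_s : uniq s) (s0_notin : forall u, s0 u \notin s).

(* Hilbert's hotel: the words [nseq k false] make room for the finitely many
   points of [s] in front of the range of [s0]. *)
Definition absorb_zeros (k : nat) : T :=
  if k < size s then nth (s0 [::]) s k else s0 (nseq (k - size s) false).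

Definition absorb (u : word) : T :=
  if all negb u then absorb_zeros (size u) else s0 u.

Lemma absorb_zeros_inj : injective absorb_zeros.
Proof.
move=> k l; rewrite /absorb_zeros.
case: (ltnP k (size s)) => lt_ks; case: (ltnP l (size s)) => lt_ls.
- by move/eqP; rewrite nth_uniq // => /eqP.
- by move=> E; move: (s0_notin (nseq (l - size s) false)); rewrite -E mem_nth.
- by move=> E; move: (s0_notin (nseq (k - size s) false)); rewrite E mem_nth.
- by move=> /s0_inj /(congr1 size); rewrite !size_nseq; lia.
Qed.

Lemma absorb_zeros_s0 k u : absorb_zeros k = s0 u -> all negb u.
Proof.
rewrite /absorb_zeros; case: ltnP => [lt_ks E | _ /s0_inj <-].
  by move: (s0_notin u); rewrite -E mem_nth.
by rewrite all_nseq orbT.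
Qed.

Lemma absorb_inj : injective absorb.
Proof.
move=> u v; rewrite /absorb.
case Zu: (all negb u); case Zv: (all negb v).
- by move=> /absorb_zeros_inj Esize; rewrite (all_negb_nseq Zu) (all_negb_nseq Zv) Esize.
- by move=> /absorb_zeros_s0; rewrite Zv.
- by move=> /esym /absorb_zeros_s0; rewrite Zu.
- exact: s0_inj.
Qed.

Lemma absorb_range y : (exists u, absorb u = y) <-> (exists u, s0 u = y) \/ y \in s.
Proof.
split=> [[u <-] | [[u <-] | y_s]].
- rewrite /absorb /absorb_zeros; case: (all negb u); last by left; exists u.
  by case: ltnP => [lt_us | _]; [right; rewrite mem_nth | left; eexists].
- case Zu: (all negb u); last by exists u; rewrite /absorb Zu.
  exists (nseq (size u + size s) false).
  rewrite /absorb /absorb_zeros all_nseq orbT size_nseq ltnNge leq_addl /=.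
  by rewrite addnK -all_negb_nseq.
- exists (nseq (index y s) false).
  by rewrite /absorb /absorb_zeros all_nseq orbT size_nseq index_mem y_s nth_index.
Qed.

End Absorb.

Section Decomposition.
Local Open Scope classical_set_scope.
Variable T : Type.

Definition disjoint_injective (F : set (word -> T)) : Prop :=
  forall s, F s -> injective s /\ forall s' u u', F s' -> s u = s' u' -> s = s'.

Definition covered (F : set (word -> T)) (x : T) : Prop :=
  exists2 s, F s & exists u, s u = x.

Lemma disjoint_injective_maximal : exists F,
  disjoint_injective F /\ forall G, F `<` G -> ~ disjoint_injective G.
Proof.
apply: Zorn_bigcup => Fs Fs_disj Fs_total s [F1 Fs_F1 F1s]; split.
  by case: (Fs_disj _ Fs_F1 _ F1s).
move=> s' u u' [F2 Fs_F2 F2s'] E.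
case: (Fs_total _ _ Fs_F1 Fs_F2) => sub.
- by case: (Fs_disj _ Fs_F2 s (sub _ F1s)) => _ /(_ s' u u' F2s' E).
- by case: (Fs_disj _ Fs_F1 s F1s) => _ /(_ s' u u' (sub _ F2s') E).
Qed.

(* An injective sequence of uncovered points, reindexed by words through
   [pickle], could be added to a maximal family. *)
Lemma maximal_uncovered_finite F :
  disjoint_injective F -> (forall G, F `<` G -> ~ disjoint_injective G) ->
  ~ exists h : nat -> T, injective h /\ forall n, ~ covered F (h n).
Proof.
move=> F_disj F_max [h [h_inj h_unc]].
pose s_new (u : word) := h (pickle u).
have new_apart s u u' : F s -> s u <> s_new u'.
  by move=> Fs E; apply: (h_unc (pickle u')); exists s => //; exists u.
apply: (F_max (F `|` [set s_new])).
  split=> [s Fs|]; first by left.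
  by move=> /(_ s_new (or_intror erefl)) Fnew; apply: (@new_apart s_new [::] [::] Fnew).
move=> s [Fs | ->].
  have [s_inj s_disj] := F_disj s Fs; split=> // s' u u' [Fs' | ->] E.
  - exact: s_disj E.
  - by case: (@new_apart s u u' Fs E).
split=> [u u' /h_inj /(pcan_inj pickleK) // | s' u u' [Fs' | ->] E //].
by case: (@new_apart s' u' u Fs' (esym E)).
Qed.

Lemma covering_family_decomposition F :
  disjoint_injective F -> (forall x, covered F x) ->
  exists (enc : {s | F s} * word -> T) (dec : T -> {s | F s} * word),
    cancel enc dec /\ cancel dec enc.
Proof.
move=> F_disj F_cover.
pose enc (p : {s | F s} * word) := sval p.1 p.2.
have enc_inj : injective enc.
  move=> [[s Fs] u] [[s' Fs'] u']; rewrite /enc /= => E.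
  have [s_inj /(_ s' u u' Fs' E) Es] := F_disj s Fs; subst s'.
  by move/s_inj: E => ->; rewrite (Prop_irrelevance Fs Fs').
have enc_surj x : exists p, enc p = x.
  by have [s Fs [u <-]] := F_cover x; exists (exist _ s Fs, u).
exists enc, (fun x => sval (cid (enc_surj x))).
have decK : cancel (fun x => sval (cid (enc_surj x))) enc by move=> x; case: cid.
by split=> // p; apply: enc_inj; rewrite decK.
Qed.

Lemma absorb_uncovered F s0 (s : seq {classic T}) :
  disjoint_injective F -> F s0 -> uniq s -> (forall x, ~ covered F x <-> x \in s) ->
  exists G, disjoint_injective G /\ forall x, covered G x.
Proof.
move=> F_disj Fs0 uniq_s unc_s; have [s0_inj s0_disj] := F_disj s0 Fs0.
have s0_notin u : s0 u \notin s.
  by apply/negP => /unc_s; apply; exists s0 => //; exists u.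
pose t := @absorb {classic T} s0 s.
have t_inj : injective t := @absorb_inj {classic T} s0 s s0_inj uniq_s s0_notin.
have t_range : forall y, (exists u, t u = y) <-> (exists u, s0 u = y) \/ y \in s :=
  @absorb_range {classic T} s0 s.
have t_apart s' u u' : F s' -> s' <> s0 -> t u <> s' u'.
  move=> Fs' ne_s'0 E.
  have [[v Ev] | t_s] := (t_range (t u)).1 (ex_intro _ u erefl).
    by apply: ne_s'0; apply: esym; apply: (s0_disj s' v u' Fs'); rewrite Ev.
  by move/unc_s: t_s; apply; exists s' => //; exists u'.
exists ([set s' | F s' /\ s' <> s0] `|` [set t]); split.
  move=> s1 [[F1 ne1] | ->].
    have [s1_inj s1_disj] := F_disj s1 F1; split=> // s2 u u' [[F2 _] | ->] E.
    - exact: s1_disj E.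
    - by case: (t_apart _ u' u F1 ne1 (esym E)).
  split=> [|s2 u u' [[F2 ne2] | ->] E //]; first exact: t_inj.
  by case: (t_apart _ u u' F2 ne2 E).
move=> x; case: (pselect (covered F x)) => [[s1 F1 [u <-]] | x_unc].
  case: (pselect (s1 = s0)) => [-> | ne1]; last by exists s1; [left | exists u].
  have [v tv] := (t_range (s0 u)).2 (or_introl (ex_intro _ u erefl)).
  by exists t; [right | exists v].
have [v tv] := (t_range x).2 (or_intror ((unc_s x).1 x_unc)).
by exists t; [right | exists v].
Qed.

Lemma word_product_decomposition : infinite_type T ->
  exists (K : Type) (enc : K * word -> T) (dec : T -> K * word),
    cancel enc dec /\ cancel dec enc.
Proof.
move=> [g g_inj].
have [F [F_disj F_max]] := disjoint_injective_maximal.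
have no_seq := maximal_uncovered_finite F_disj F_max.
have [s0 Fs0] : exists s0, F s0.
  apply: contrapT => noF; apply: no_seq; exists g; split=> // n [s Fs].
  by case: noF; exists s.
have [[h [h_inj h_unc]] | [s [uniq_s unc_s]]] :=
  @injective_or_finite {classic T} (fun x => ~ covered F x).
  by case: no_seq; exists h.
have [G [G_disj G_cover]] := absorb_uncovered F_disj Fs0 uniq_s unc_s.
by exists {s' | G s'}; apply: covering_family_decomposition.
Qed.

End Decomposition.

Theorem corollary3p3 (X : Type) (HX : infinite_type X) (w : nat -> word) :
  (forall n, w n != [::]) ->
  (forall n m (p : word), p != [::] -> size p < size (w n) ->
      prefix p (w n) -> ~~ suffix p (w m)) ->
  (forall n m, m <> n -> ~~ subword (w n) (w m)) ->
  universal_for_transf X w.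
Proof.
move=> w_neq0 prefix_not_suffix not_infix f.
have [K [enc [dec [encK decK]]]] := word_product_decomposition HX.
exists (act w enc dec f); split; first exact: act_hom.
by move=> n; apply: funext => x; apply: act_code.
Qed.
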